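(* Reduction Rule 1 is safe: if \((G',k')\) is obtained from an instance \((G,k)\) of Vertex Cover by applying Reduction Rule 1, then \(k'+MM(G')-2LP(G')\leq k+MM(G)-2LP(G)\).
   Context: All graphs are finite, undirected and simple. An instance of Vertex Cover is a pair \((G,k)\), \(k\in\mathbb{N}\). \(MM(G)\) is the size of a maximum matching. \(LPVC(G)\) is the LP: minimize \(\sum_v x_v\) subject to \(x_u+x_v\ge1\) for each edge \(\{u,v\}\) and \(0\le x_v\le1\); \(LP(G)\) is its optimum value. For a half-integral solution \(x\) (values in \(\{0,\frac12,1\}\)), \(V_i^x=\{v: x_v=i\}\). Reduction Rule 1 (applied when the all-\(\frac12\) assignment is not the unique optimum of \(LPVC(G)\)): compute an optimal half-integral solution \(x\) to \(LPVC(G)\) such that the all-\(\frac12\) assignment is the unique optimum solution to \(LPVC(G[V_{1/2}^x])\), and set \(G'=G[V_{1/2}^x]\), \(k'=k-|V_1^x|\). *)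

From HB Require Import structures.
From mathcomp Require Import all_boot all_order all_algebra.
Set Implicit Arguments. Unset Strict Implicit. Unset Printing Implicit Defensive.
Import Order.TTheory GRing.Theory Num.Theory.
Local Open Scope ring_scope.

(* A graph is given by a vertex set V : {set T} and an adjacency relation
   e : rel T (assumed symmetric and irreflexive); its edges are the pairs
   {u,v} with u, v in V and e u v.  The induced subgraph G[S] (S \subset V)
   is the graph (S, e). *)

Section Graphs.
Variable T : finType.

Definition is_edge (V : {set T}) (e : rel T) (u v : T) : bool :=
  [&& u \in V, v \in V & e u v].

Definition is_matching (V : {set T}) (e : rel T) (M : {set {set T}}) : bool :=
  [forall f in M, exists u, exists v, (is_edge V e u v) && (f == [set u; v])]
  && [forall f in M, forall g in M, (f != g) ==> [disjoint f & g]].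

Definition MM (V : {set T}) (e : rel T) : nat :=
  \max_(M : {set {set T}} | is_matching V e M) #|M|.

Variable R : realFieldType.

Definition lp_feasible (V : {set T}) (e : rel T) (x : T -> R) : Prop :=
  (forall u v, is_edge V e u v -> 1 <= x u + x v) /\
  (forall v, v \in V -> 0 <= x v <= 1).

Definition lp_obj (V : {set T}) (x : T -> R) : R := \sum_(v in V) x v.

Definition lp_optimal (V : {set T}) (e : rel T) (x : T -> R) : Prop :=
  lp_feasible V e x /\
  forall y, lp_feasible V e y -> lp_obj V x <= lp_obj V y.

Definition is_LP_value (V : {set T}) (e : rel T) (r : R) : Prop :=
  (exists x, lp_feasible V e x /\ lp_obj V x = r) /\
  forall y, lp_feasible V e y -> r <= lp_obj V y.

Definition half_integral (V : {set T}) (x : T -> R) : Prop :=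
  forall v, v \in V -> x v = 0 \/ x v = 2^-1 \/ x v = 1.

Definition Vi (V : {set T}) (x : T -> R) (i : R) : {set T} :=
  [set v in V | x v == i].

Definition all_half : T -> R := fun _ => 2^-1.

Definition half_unique_opt (V : {set T}) (e : rel T) : Prop :=
  lp_optimal V e all_half /\
  forall y, lp_optimal V e y -> forall v, v \in V -> y v = 2^-1.

End Graphs.

Arguments half_unique_opt {T} R V e.
Arguments all_half {T R}.

(* Write V1, Vh, V0 for the vertices where x is 1, 1/2, 0.  Optimality of x
   and of the all-1/2 assignment on G' = G[Vh] give LP(G) = |V1| + |Vh|/2 and
   LP(G') = |Vh|/2, so the claim reduces to MM(G') + |V1| <= MM(G).  Every
   S \subset V1 has at least |S| neighbours N(S) in V0: otherwise setting x to
   1/2 on S and N(S) keeps it feasible and lowers its value by (|S| - |N(S)|)/2.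
   By Hall's theorem V1 can then be matched into V0, and these edges together
   with a maximum matching of G', which lives on Vh, form a matching of G. *)

From mathcomp Require Import all_boot all_order all_algebra.
From mathcomp Require Import zify lra.
Set Implicit Arguments. Unset Strict Implicit. Unset Printing Implicit Defensive.
Import Order.TTheory GRing.Theory Num.Theory.

Section HallTheorem.
Variables (T : finType) (r : rel T).
Implicit Types A B C S U : {set T}.

Definition nbhd B S : {set T} := [set b in B | [exists a in S, r a b]].

Definition hall_condition A B : Prop :=
  forall S, S \subset A -> #|S| <= #|nbhd B S|.

Definition matchable A B : Prop :=
  exists f : T -> T, {in A &, injective f} /\
    forall a, a \in A -> f a \in B /\ r a (f a).

Lemma nbhd_sub B S : nbhd B S \subset B.
Proof. by apply/subsetP=> b /[!inE] /andP[]. Qed.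

Lemma nbhdU B S1 S2 : nbhd B (S1 :|: S2) = nbhd B S1 :|: nbhd B S2.
Proof.
apply/setP=> b; rewrite !inE -andb_orr; congr (_ && _); apply/existsP/orP.
- by case=> a /andP[/setUP[] Ha rab]; [left|right]; apply/existsP; exists a; rewrite Ha.
- by case=> /existsP[a /andP[Ha rab]]; exists a; rewrite inE Ha ?orbT.
Qed.

Lemma nbhd_subD B C U : nbhd B U \subset nbhd (B :\: C) U :|: C.
Proof.
apply/subsetP=> b; rewrite !inE => /andP[bB ->].
by rewrite bB andbT andbC; case: (b \in C).
Qed.

Lemma card_nbhd_subD B C U : #|nbhd B U| <= #|nbhd (B :\: C) U| + #|C|.
Proof. exact: leq_trans (subset_leq_card (nbhd_subD B C U)) (leq_card_setU _ _).1. Qed.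

Lemma matchable0 B : matchable set0 B.
Proof. by exists id; split=> [? ? /[!inE] | ? /[!inE]]. Qed.

Lemma matchable1 a b : r a b -> matchable [set a] [set b].
Proof.
move=> rab; exists (fun=> b); split=> [x y /set1P-> /set1P-> //|x /set1P->].
by rewrite set11.
Qed.

Lemma matchableS A B B' : B \subset B' -> matchable A B -> matchable A B'.
Proof.
move=> sBB' [f [f_inj fAB]]; exists f; split=> // a /fAB[fa_in ->].
by rewrite (subsetP sBB').
Qed.

Lemma matchable_nbhd A B : matchable A B -> matchable A (nbhd B A).
Proof.
case=> f [f_inj fAB]; exists f; split=> // a aA; have [fa_in rafa] := fAB a aA.
by split=> //; rewrite inE fa_in; apply/existsP; exists a; rewrite aA.
Qed.

Lemma matchable_glue S A B1 B2 : [disjoint B1 & B2] ->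
  matchable S B1 -> matchable (A :\: S) B2 -> matchable A (B1 :|: B2).
Proof.
move=> dB [f1 [f1_inj f1SB]] [f2 [f2_inj f2SB]].
have f12_neq a1 a2 : a1 \in S -> a2 \in A :\: S -> f1 a1 != f2 a2.
  move=> /f1SB[f1a _] /f2SB[f2a _]; apply: contraTneq f1a => ->.
  by rewrite (disjointFl dB).
have inD a : a \in A -> a \notin S -> a \in A :\: S by move=> aA aS; rewrite inE aS.
exists (fun a => if a \in S then f1 a else f2 a); split.
- move=> a1 a2 a1A a2A.
  case: ifPn => a1S; case: ifPn => a2S.
  + exact: f1_inj.
  + by move/eqP; rewrite (negPf (f12_neq _ _ a1S (inD _ a2A a2S))).
  + by move/eqP; rewrite eq_sym (negPf (f12_neq _ _ a2S (inD _ a1A a1S))).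
  + by apply: f2_inj; apply: inD.
- move=> a aA; case: ifPn => aS.
  + by have [? ?] := f1SB a aS; rewrite inE; split=> //; apply/orP; left.
  + by have [? ?] := f2SB a (inD a aA aS); rewrite inE; split=> //; apply/orP; right.
Qed.

Lemma hall_condition_tight A B S : hall_condition A B -> S \subset A ->
  #|nbhd B S| <= #|S| -> hall_condition (A :\: S) (B :\: nbhd B S).
Proof.
move=> hAB sSA tightS U; rewrite subsetD => /andP[sUA dUS].
have nbhdUS : nbhd B (U :|: S) \subset nbhd (B :\: nbhd B S) U :|: nbhd B S.
  by rewrite nbhdU subUset nbhd_subD subsetUr.
have /eqP cardUS : #|U :|: S| == #|U| + #|S| by rewrite (leq_card_setU U S).2.
have := hAB (U :|: S); rewrite subUset sUA sSA cardUS => /(_ isT).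
move/leq_trans/(_ (subset_leq_card nbhdUS)).
move/leq_trans/(_ (leq_card_setU _ _).1); lia.
Qed.

Lemma hall_condition_strict A B a b : a \in A ->
  (forall U, U \subset A -> U != set0 -> U != A -> #|U| < #|nbhd B U|) ->
  hall_condition (A :\ a) (B :\ b).
Proof.
move=> aA strict U sU; have [->|nU0] := eqVneq U set0; first by rewrite cards0.
have nUA : U != A by apply/eqP=> UA; move: sU; rewrite UA subsetD1 aA andbF.
have := strict U (subset_trans sU (subD1set _ _)) nU0 nUA.
have := card_nbhd_subD B [set b] U; rewrite cards1; lia.
Qed.

(* Induction on |A|: split A at a nonempty proper subset S with |N(S)| = |S|
   if there is one, otherwise match any vertex of A to any of its neighbours. *)
Theorem hall A B : hall_condition A B -> matchable A B.
Proof.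
move: {2}#|A| (leqnn #|A|) => n; elim: n A B => [|n IH] A B.
  by rewrite leqn0 => /eqP/cards0_eq-> _; apply: matchable0.
move=> cardA hAB.
have [/existsP[S /and4P[sSA nS0 nSA tightS]]|no_tight] :=
  boolP [exists S : {set T}, [&& S \subset A, S != set0, S != A & #|nbhd B S| <= #|S|]].
  have ltSA : #|S| < #|A| by rewrite proper_card // properEneq nSA.
  have ltDA : #|A :\: S| < #|A|.
    by move: nS0; rewrite cardsD (setIidPr sSA) -card_gt0; lia.
  have dB : [disjoint nbhd B S & B :\: nbhd B S].
    by rewrite -setI_eq0 setIDA setIC -setIDA setDv setI0.
  have mS : matchable S (nbhd B S).
    apply/matchable_nbhd/IH; first lia.
    by move=> U sUS; apply/hAB/(subset_trans sUS).
  have mD : matchable (A :\: S) (B :\: nbhd B S).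
    by apply: IH; [lia | apply: hall_condition_tight].
  apply: matchableS (matchable_glue dB mS mD).
  by rewrite subUset nbhd_sub subsetDl.
have [->|[a aA]] := set_0Vmem A; first exact: matchable0.
have strict U : U \subset A -> U != set0 -> U != A -> #|U| < #|nbhd B U|.
  move=> sUA nU0 nUA; rewrite ltnNge; apply: contra no_tight => le.
  by apply/existsP; exists U; rewrite sUA nU0 nUA.
have /card_gt0P[b] : 0 < #|nbhd B [set a]|.
  by apply: leq_trans (hAB _ _); rewrite ?cards1 ?sub1set.
rewrite inE => /andP[bB /existsP[_ /andP[/set1P-> rab]]].
have dB : [disjoint [set b] & B :\ b] by rewrite disjoints1 setD11.
have mD : matchable (A :\ a) (B :\ b).
  apply: IH; last exact: hall_condition_strict.
  by move: cardA; rewrite (cardsD1 a A) aA; lia.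
apply: matchableS (matchable_glue dB (matchable1 rab) mD).
by rewrite subUset sub1set bB subD1set.
Qed.
End HallTheorem.

Section Matchings.
Variables (T : finType) (e : rel T).
Implicit Types (V W A B C : {set T}) (M : {set {set T}}).

Lemma is_matchingP V M :
  reflect ((forall f, f \in M -> exists u v, is_edge V e u v /\ f = [set u; v]) /\
           (forall f g, f \in M -> g \in M -> f != g -> [disjoint f & g]))
          (is_matching V e M).
Proof.
apply: (iffP andP) => [[/forallP edgeM /forallP disjM] | [edgeM disjM]]; split.
- move=> f fM; have /existsP[u /existsP[v /andP[uv /eqP->]]] := implyP (edgeM f) fM.
  by exists u, v.
- by move=> f g fM gM; move: (implyP (disjM f) fM) => /forall_inP/(_ g gM)/implyP.
- apply/forall_inP=> f /edgeM[u [v [uv ->]]].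
  by apply/existsP; exists u; apply/existsP; exists v; rewrite uv eqxx.
- by apply/forall_inP=> f fM; apply/forall_inP=> g gM; apply/implyP; apply: disjM.
Qed.

Lemma MM_ge_card V M : is_matching V e M -> #|M| <= MM V e.
Proof. exact: (leq_bigmax_cond (F := fun M : {set {set T}} => #|M|)). Qed.

Lemma MM_attained V : exists2 M, is_matching V e M & MM V e = #|M|.
Proof.
have : 0 < #|[pred M | is_matching V e M]|.
  by apply/card_gt0P; exists set0; apply/is_matchingP; split=> [f|f g]; rewrite inE.
case/(eq_bigmax_cond (fun M : {set {set T}} => #|M|)) => M matchM maxM.
by exists M; rewrite // /MM -maxM; apply: eq_bigl.
Qed.

Lemma is_matching_subset V W M :
  W \subset V -> is_matching W e M -> is_matching V e M.
Proof.
move=> sWV /is_matchingP[edgeM disjM]; apply/is_matchingP; split=> // f /edgeM.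
case=> u [v [/and3P[uW vW euv] ->]]; exists u, v; split=> //.
by rewrite /is_edge !(subsetP sWV) ?euv.
Qed.

Lemma matchingU V M1 M2 : is_matching V e M1 -> is_matching V e M2 ->
  (forall f g, f \in M1 -> g \in M2 -> [disjoint f & g]) ->
  is_matching V e (M1 :|: M2) /\ #|M1 :|: M2| = #|M1| + #|M2|.
Proof.
move=> /is_matchingP[edge1 disj1] /is_matchingP[edge2 disj2] disj12; split.
  apply/is_matchingP; split=> [f /setUP[/edge1|/edge2] //|f g].
  case/setUP=> fM /setUP[] gM; [exact: disj1 | move=> _ | move=> _ | exact: disj2].
  - exact: disj12.
  - by rewrite disjoint_sym; apply: disj12.
apply/eqP; rewrite (leq_card_setU M1 M2).2 -setI_eq0; apply/eqP/setP=> f.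
rewrite !inE; apply/negbTE/andP=> -[fM1 fM2]; have := disj12 f f fM1 fM2.
have [u [v [_ ->]]] := edge1 f fM1.
by rewrite -setI_eq0 setIid => /eqP/setP/(_ u); rewrite !inE eqxx.
Qed.

Lemma matching_of_matchable V A B : A \subset V -> B \subset V ->
  [disjoint A & B] -> matchable e A B ->
  exists M, [/\ is_matching V e M, #|M| = #|A| & forall f, f \in M -> f \subset A :|: B].
Proof.
move=> sAV sBV dAB [m [m_inj mAB]].
have mB a : a \in A -> m a \in B by case/mAB.
have edge_inj : {in A &, injective (fun a => [set a; m a])}.
  move=> a1 a2 a1A a2A E; have : a1 \in [set a2; m a2] by rewrite -E set21.
  case/set2P=> // a1m; move: (mB _ a2A); rewrite -a1m => a1B.
  by move: (disjointFl dAB a1B); rewrite a1A.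
exists [set [set a; m a] | a in A]; split; last first.
- by move=> _ /imsetP[a aA ->]; rewrite subUset !sub1set !inE aA mB ?orbT.
- by rewrite card_in_imset.
apply/is_matchingP; split=> [_ /imsetP[a aA ->]|].
  exists a, (m a); have [maB eama] := mAB a aA.
  by rewrite /is_edge (subsetP sAV) ?(subsetP sBV) ?eama.
move=> _ _ /imsetP[a1 a1A ->] /imsetP[a2 a2A ->] neq.
have neq12 : a1 != a2 by apply: contraNneq neq => ->.
rewrite -setI_eq0; apply/eqP/setP=> w; rewrite in_setI in_set0.
apply/negbTE/andP=> -[/set2P[]-> /set2P[]].
- by apply/eqP.
- by move=> a1m; move: (disjointFl dAB (mB _ a2A)); rewrite -a1m a1A.
- by move=> ma1; move: (disjointFl dAB (mB _ a1A)); rewrite ma1 a2A.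
- by move/m_inj=> /(_ a1A a2A); apply/eqP.
Qed.

Lemma matching_subset V M f : is_matching V e M -> f \in M -> f \subset V.
Proof.
case/is_matchingP=> edgeM _ /edgeM[u [v [/and3P[uV vV _] ->]]].
by rewrite subUset !sub1set uV vV.
Qed.

Lemma MM_matchable_add V A B C : A \subset V -> B \subset V -> C \subset V ->
  [disjoint A & B] -> [disjoint A :|: B & C] -> matchable e A B ->
  #|A| + MM C e <= MM V e.
Proof.
move=> sAV sBV sCV dAB dABC mAB.
have [M1 [matchM1 <- subM1]] := matching_of_matchable sAV sBV dAB mAB.
have [M2 matchM2 ->] := MM_attained C.
have disjM12 f g : f \in M1 -> g \in M2 -> [disjoint f & g].
  by move=> /subM1 sf /(matching_subset matchM2) sg; apply: disjointW sf sg dABC.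
have [matchM cardM] := matchingU matchM1 (is_matching_subset sCV matchM2) disjM12.
by rewrite -cardM MM_ge_card.
Qed.
End Matchings.

Local Open Scope ring_scope.

Section VertexCoverLP.
Variables (T : finType) (R : realFieldType) (e : rel T).
Implicit Types (V A : {set T}) (x y : T -> R).

Lemma lp_value_optimal V x r :
  lp_optimal V e x -> is_LP_value V e r -> r = lp_obj V x.
Proof.
by move=> [xf x_min] [[y [yf <-]] r_min]; apply/eqP; rewrite eq_le r_min ?x_min.
Qed.

Lemma Vi_sub V x i : Vi V x i \subset V.
Proof. by apply/subsetP=> v /[!inE] /andP[]. Qed.

Lemma Vi_disjoint V x i j : i != j -> [disjoint Vi V x i & Vi V x j].
Proof.
move=> neq_ij; rewrite -setI_eq0; apply/eqP/setP=> v; rewrite !inE.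
by apply/negbTE; apply: contra neq_ij => /andP[/andP[_ /eqP<-] /andP[_ /eqP->]].
Qed.

Lemma sum_mem_indicator V A :
  A \subset V -> \sum_(v in V) ((v \in A)%:R : R) = #|A|%:R.
Proof.
move=> sAV; rewrite (eq_bigr (fun v => if v \in A then 1 else 0)); last first.
  by move=> v _; case: (v \in A).
rewrite -big_mkcondr sumr_const; congr (_ *+ _); apply: eq_card => v.
by rewrite unfold_in /= andb_idl // => /(subsetP sAV).
Qed.

Lemma lp_obj_all_half V : lp_obj V (all_half : T -> R) = #|V|%:R / 2.
Proof. by rewrite /lp_obj /all_half sumr_const [RHS]mulrC mulr_natr. Qed.

Lemma lp_obj_half_integral V x : half_integral V x ->
  lp_obj V x = #|Vi V x 1|%:R + #|Vi V x 2^-1|%:R / 2.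
Proof.
move=> x_half; rewrite -!(sum_mem_indicator (Vi_sub V x _)) mulr_suml -big_split /=.
have ne01 : (0 == 1 :> R) = false by apply/eqP; lra.
have ne0h : (0 == 2^-1 :> R) = false by apply/eqP; lra.
have neh1 : (2^-1 == 1 :> R) = false by apply/eqP; lra.
have ne1h : (1 == 2^-1 :> R) = false by apply/eqP; lra.
apply: eq_bigr => v vV; rewrite !inE vV /=.
by case: (x_half v vV) => [|[|]] ->; rewrite ?eqxx ?ne01 ?ne0h ?neh1 ?ne1h /=; lra.
Qed.

Lemma lp_optimal_hall V x : symmetric e -> half_integral V x ->
  lp_optimal V e x -> hall_condition e (Vi V x 1) (Vi V x 0).
Proof.
move=> e_sym x_half [[x_cover x_bound] x_min] S sS.
set N := nbhd e (Vi V x 0) S.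
have sSV : S \subset V := subset_trans sS (Vi_sub _ _ _).
have sNV : N \subset V := subset_trans (nbhd_sub _ _ _) (Vi_sub _ _ _).
have xS w : w \in S -> x w = 1 by move/(subsetP sS); rewrite inE => /andP[_ /eqP].
have xN w : w \in N -> x w = 0 by rewrite !inE => /andP[/andP[_ /eqP]].
have N_nbhd u v : u \in S -> v \in V -> e u v -> x v = 0 -> v \in N.
  by move=> uS vV euv xv0; rewrite !inE vV xv0 eqxx; apply/existsP; exists u; rewrite uS.
pose y w := if w \in S :|: N then 2^-1 else x w.
have half_side u v : is_edge V e u v -> u \in S :|: N -> v \notin S :|: N -> 2^-1 <= x v.
  case/and3P=> uV vV euv /setUP[uS|uN] vSN.
    have [xv0|[->|->]] := x_half v vV; try lra.
    by move: vSN; rewrite inE (N_nbhd u) ?orbT.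
  by have := x_cover u v; rewrite /is_edge uV vV euv xN // => /(_ isT); lra.
have y_feasible : lp_feasible V e y.
  split=> [u v uv|w wV]; rewrite /y; last by case: ifP => _; [lra | exact: x_bound].
  have vu : is_edge V e v u by move: uv; rewrite /is_edge e_sym andbCA.
  case: ifPn => uSN; case: ifPn => vSN; try lra.
  - by have := half_side u v uv uSN vSN; lra.
  - by have := half_side v u vu vSN uSN; lra.
  - exact: x_cover.
have y_shift w : y w = x w + ((w \in N)%:R - (w \in S)%:R) / 2.
  rewrite /y inE; case: (boolP (w \in S)) => [wS|_]; last first.
    by case: (boolP (w \in N)) => [/xN->|_] /=; lra.
  have wN : w \in N = false.
    by apply/negbTE/negP=> /xN; rewrite xS // => /eqP; rewrite oner_eq0.
  by rewrite xS // wN /=; lra.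
have := x_min y y_feasible.
rewrite /lp_obj (eq_bigr _ (fun w _ => y_shift w)) big_split -mulr_suml sumrB /=.
rewrite !sum_mem_indicator // => obj_le.
by rewrite -(ler_nat R); lra.
Qed.
End VertexCoverLP.

Theorem lemma7 (R : realFieldType) (T : finType) (e : rel T)
  (e_sym : symmetric e) (e_irr : irreflexive e) (k : nat) (x : T -> R) :
  ~ half_unique_opt R [set: T] e ->
  half_integral [set: T] x ->
  lp_optimal [set: T] e x ->
  half_unique_opt R (Vi [set: T] x 2^-1) e ->
  forall (k' : int) (lpG lpG' : R),
  k' = (k%:Z - #|Vi [set: T] x 1|%:Z)%R ->
  is_LP_value [set: T] e lpG ->
  is_LP_value (Vi [set: T] x 2^-1) e lpG' ->
  (k' + (MM (Vi [set: T] x 2^-1) e)%:Z)%:~R - 2 * lpG'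
    <= (k%:Z + (MM [set: T] e)%:Z)%:~R - 2 * lpG.
Proof.
move=> _ x_half x_opt [half_opt _] k' lpG lpG' -> lpG_val lpG'_val.
set V1 := Vi [set: T] x 1; set Vh := Vi [set: T] x 2^-1; set V0 := Vi [set: T] x 0.
have -> : lpG = #|V1|%:R + #|Vh|%:R / 2.
  by rewrite (lp_value_optimal x_opt lpG_val) lp_obj_half_integral.
have -> : lpG' = #|Vh|%:R / 2.
  by rewrite (lp_value_optimal half_opt lpG'_val) lp_obj_all_half.
have ne10 : (1 : R) != 0 := oner_neq0 R.
have ne1h : (1 : R) != 2^-1 by apply/eqP; lra.
have ne0h : (0 : R) != 2^-1 by apply/eqP; lra.
have : (#|V1| + MM Vh e <= MM [set: T] e)%N.
  apply: MM_matchable_add (hall (lp_optimal_hall e_sym x_half x_opt));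
    rewrite ?subsetT ?Vi_disjoint //.
  by rewrite -setI_eq0 setIUl setU_eq0 !setI_eq0 !Vi_disjoint.
rewrite -(ler_nat R) natrD => MM_le.
rewrite !intrD intrN !pmulrn; lra.
Qed.
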